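(* Let $0<L,W<\infty$, $\tau=iW/L$, $N\in\mathbb{N}$, and $R_N\in\{A_{N-1},B_N,B_N^\vee,C_N,C_N^\vee,BC_N,D_N\}$. Define for $\mathbf{z}=(z_1,\dots,z_N)\in\mathbb{C}^N$, $z_j=x_j+iy_j$, $$Q^{A_{N-1}}(\mathbf{z})=\exp\Big(-\frac{2\pi\mathcal{N}}{LW}\sum_{j=1}^Ny_j^2\Big)\Big|\vartheta_{s(N)}\Big(\sum_{k=1}^N\frac{z_k}{L};\tau\Big)\Big|^2\big|W^{A_{N-1}}(\mathbf{z}/L;\tau)\big|^2,$$ and for the other six types $Q^{R_N}(\mathbf{z})=\exp(-\frac{2\pi\mathcal{N}}{LW}\sum_j y_j^2)|W^{R_N}(\mathbf{z}/L;\tau)|^2$. Then $Q^{R_N}$ is doubly periodic with periods $(L,iW)$ in each variable: for every $m=1,\dots,N$, $Q^{R_N}(\sigma_m(L)\mathbf{z})=Q^{R_N}(\mathbf{z})$ and $Q^{R_N}(\sigma_m(iW)\mathbf{z})=Q^{R_N}(\mathbf{z})$.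
   Context: Jacobi theta functions: for $v\in\mathbb{C}$, $\Im\tau>0$, $q_0=e^{\pi i\tau}$: $\vartheta_0(v;\tau)=\sum_{n\in\mathbb{Z}}(-1)^nq_0^{n^2}e^{2\pi inv}$, $\vartheta_1(v;\tau)=i\sum_{n}(-1)^nq_0^{(n-1/2)^2}e^{(2n-1)\pi iv}$, $\vartheta_2(v;\tau)=\sum_nq_0^{(n-1/2)^2}e^{(2n-1)\pi iv}$, $\vartheta_3(v;\tau)=\sum_nq_0^{n^2}e^{2\pi inv}$. $\mathcal{N}=\mathcal{N}^{R_N}$ is: $N$ for $A_{N-1}$; $2N-1$ for $B_N$; $2N$ for $B_N^\vee,C_N^\vee$; $2(N+1)$ for $C_N$; $2N+1$ for $BC_N$; $2(N-1)$ for $D_N$. $s(N)=0$ for $N$ even, $3$ for $N$ odd. Macdonald denominators, with $P(\boldsymbol\xi)=\prod_{1\le j<k\le N}\vartheta_1(\xi_k-\xi_j;\tau)\vartheta_1(\xi_k+\xi_j;\tau)$: $W^{A_{N-1}}(\boldsymbol\xi;\tau)=\prod_{j<k}\vartheta_1(\xi_k-\xi_j;\tau)$; $W^{B_N}=\prod_\ell\vartheta_1(\xi_\ell;\tau)P$; $W^{B_N^\vee}=\prod_\ell\vartheta_1(2\xi_\ell;2\tau)P$; $W^{C_N}=\prod_\ell\vartheta_1(2\xi_\ell;\tau)P$; $W^{C_N^\vee}=\prod_\ell\vartheta_1(\xi_\ell;\tau/2)P$; $W^{BC_N}=\prod_\ell\vartheta_1(\xi_\ell;\tau)\vartheta_0(2\xi_\ell;2\tau)P$;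 $W^{D_N}=P$. $\mathbf{z}/L=(z_1/L,\dots,z_N/L)$; $\sigma_m(w)$ replaces $z_m$ by $z_m+w$. *)

From Stdlib Require Import Reals ZArith Lra.
From Coquelicot Require Import Coquelicot.
Open Scope R_scope.

Definition cexp (z : C) : C :=
  (exp (Re z) * cos (Im z), exp (Re z) * sin (Im z)).

(* For the absolutely convergent theta series this is the usual sum. *)
Definition zsum (f : Z -> C) : C :=
  (Series (fun n => Re (f (Z.of_nat n))) +
   Series (fun n => Re (f (- Z.of_nat n - 1)%Z)),
   Series (fun n => Im (f (Z.of_nat n))) +
   Series (fun n => Im (f (- Z.of_nat n - 1)%Z))).

Definition sgnZ (n : Z) : C := if Z.even n then RtoC 1 else RtoC (-1).

(* q0^x with q0 = exp(pi i tau), i.e. exp(pi i tau x) *)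
Definition q0pow (tau : C) (x : R) : C := cexp (Cmult (Cmult (RtoC PI) Ci) (Cmult tau (RtoC x))).

Definition halfZ (n : Z) : R := IZR n - /2.

Definition theta0 (v tau : C) : C :=
  zsum (fun n => Cmult (Cmult (sgnZ n) (q0pow tau (IZR n ^ 2)))
                       (cexp (Cmult (Cmult (RtoC (2 * PI * IZR n)) Ci) v))).
Definition theta1 (v tau : C) : C :=
  Cmult Ci (zsum (fun n => Cmult (Cmult (sgnZ n) (q0pow tau (halfZ n ^ 2)))
                       (cexp (Cmult (Cmult (RtoC ((2 * IZR n - 1) * PI)) Ci) v)))).
Definition theta2 (v tau : C) : C :=
  zsum (fun n => Cmult (q0pow tau (halfZ n ^ 2))
                       (cexp (Cmult (Cmult (RtoC ((2 * IZR n - 1) * PI)) Ci) v))).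
Definition theta3 (v tau : C) : C :=
  zsum (fun n => Cmult (q0pow tau (IZR n ^ 2))
                       (cexp (Cmult (Cmult (RtoC (2 * PI * IZR n)) Ci) v))).

Definition theta_s (N : nat) (v tau : C) : C :=
  if Nat.even N then theta0 v tau else theta3 v tau.

Inductive RootSys := TA | TB | TBv | TC | TCv | TBC | TD.
(* TA with parameter N stands for A_{N-1}; the others for X_N. *)

Definition calN (Rs : RootSys) (N : nat) : nat :=
  match Rs with
  | TA => N
  | TB => 2 * N - 1
  | TBv | TCv => 2 * N
  | TC => 2 * (N + 1)
  | TBC => 2 * N + 1
  | TD => 2 * (N - 1)
  end.

Fixpoint sumR (n : nat) (f : nat -> R) : R :=
  match n with O => 0 | S k => sumR k f + f k end.
Fixpoint sumC (n : nat) (f : nat -> C) : C :=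
  match n with O => RtoC 0 | S k => Cplus (sumC k f) (f k) end.
Fixpoint prodC (n : nat) (f : nat -> C) : C :=
  match n with O => RtoC 1 | S k => Cmult (prodC k f) (f k) end.

(* vectors xi = (xi_1,...,xi_N) are represented by xi : nat -> C, xi_j = xi (j-1) *)
Definition Pfac (N : nat) (xi : nat -> C) (tau : C) : C :=
  prodC N (fun k => prodC k (fun j =>
    Cmult (theta1 (Cminus (xi k) (xi j)) tau) (theta1 (Cplus (xi k) (xi j)) tau))).

Definition Wden (Rs : RootSys) (N : nat) (xi : nat -> C) (tau : C) : C :=
  match Rs with
  | TA => prodC N (fun k => prodC k (fun j => theta1 (Cminus (xi k) (xi j)) tau))
  | TB => Cmult (prodC N (fun l => theta1 (xi l) tau)) (Pfac N xi tau)
  | TBv => Cmult (prodC N (fun l => theta1 (Cmult (RtoC 2) (xi l)) (Cmult (RtoC 2) tau)))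
                 (Pfac N xi tau)
  | TC => Cmult (prodC N (fun l => theta1 (Cmult (RtoC 2) (xi l)) tau)) (Pfac N xi tau)
  | TCv => Cmult (prodC N (fun l => theta1 (xi l) (Cdiv tau (RtoC 2)))) (Pfac N xi tau)
  | TBC => Cmult (prodC N (fun l => Cmult (theta1 (xi l) tau)
                                          (theta0 (Cmult (RtoC 2) (xi l)) (Cmult (RtoC 2) tau))))
                 (Pfac N xi tau)
  | TD => Pfac N xi tau
  end.

Definition tauLW (L W : R) : C := (0, W / L).

Definition Qfun (Rs : RootSys) (N : nat) (L W : R) (z : nat -> C) : R :=
  let tau := tauLW L W in
  let zL := fun j => Cdiv (z j) (RtoC L) in
  exp (- (2 * PI * INR (calN Rs N)) / (L * W) * sumR N (fun j => Im (z j) ^ 2)) *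
  (match Rs with
   | TA => Cmod (theta_s N (sumC N zL) tau) ^ 2
   | _ => 1
   end) *
  Cmod (Wden Rs N zL tau) ^ 2.

(* sigma_m(w): replace z_m by z_m + w (0-based index m) *)
Definition sigma_m (m : nat) (w : C) (z : nat -> C) : nat -> C :=
  fun j => if Nat.eqb j m then Cplus (z j) w else z j.

From Stdlib Require Import Reals ZArith Lra Lia FunctionalExtensionality.
From Coquelicot Require Import Coquelicot.
Open Scope R_scope.

(* After rescaling [xi = z / L], [Q] is a product of factors
   [exp (-2 pi (Im v)^2 / Im t) |theta(v; t)|^2] with [v] among [xi_k -+ xi_j], [xi_l], [2 xi_l],
   [sum xi] and [t] among [tau], [2 tau], [tau / 2]: the Gaussian weight [N^{R_N} sum y_j^2] splits
   exactly among them, since [(sum y)^2 + sum_{j<k} (y_k - y_j)^2 = N sum y^2] and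
   [sum_{j<k} ((y_k - y_j)^2 + (y_k + y_j)^2) = 2 (N - 1) sum y^2].
   Each factor is invariant under the lattice [Z + Z t]: [theta(v + 1) = +-theta(v)] and
   [|theta(v + t)| = exp (pi Im t + 2 pi Im v) |theta(v)|], which the Gaussian compensates.
   Shifting [z_m] by [L] or [i W] shifts every argument by a lattice point. *)

(** * Complex exponential and Gaussian series *)

Lemma cexp_add (a b : C) : cexp (a + b) = (cexp a * cexp b)%C.
Proof.
  unfold cexp; rewrite re_plus, im_plus, exp_plus, cos_plus, sin_plus.
  apply injective_projections; simpl; ring.
Qed.

Lemma Cmod_cexp (z : C) : Cmod (cexp z) = exp (Re z).
Proof.
  unfold cexp, Cmod; simpl.
  replace (_ + _) with ((exp (Re z))² * ((sin (Im z))² + (cos (Im z))²))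
    by (unfold Rsqr; ring).
  rewrite sin2_cos2, Rmult_1_r. apply sqrt_Rsqr. left; apply exp_pos.
Qed.

Lemma cexp_2PI_Ci_int (n : Z) : cexp (2 * PI * Ci * IZR n) = 1.
Proof.
  assert (Hsin : sin (PI * IZR n) = 0) by (apply sin_eq_0_1; exists n; ring).
  unfold cexp.
  replace (Re _) with 0 by (simpl; ring).
  replace (Im _) with (2 * (PI * IZR n)) by (simpl; ring).
  rewrite exp_0, sin_2a, cos_2a_sin, Hsin.
  apply injective_projections; simpl; ring.
Qed.

Lemma exp_INR_mul (n : nat) (x : R) : exp (INR n * x) = exp x ^ n.
Proof.
  induction n as [|n IH]; simpl pow.
  - rewrite Rmult_0_l; apply exp_0.
  - rewrite S_INR, Rmult_plus_distr_r, Rmult_1_l, exp_plus, IH; ring.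
Qed.

Lemma exp_le_mono (x y : R) : x <= y -> exp x <= exp y.
Proof. intros [Hlt|<-]; [left; apply exp_increasing, Hlt | right; reflexivity]. Qed.

(* Completing the square: [-a n^2 + b n + c <= K - n] for a suitable constant [K]. *)
Lemma ex_series_gaussian (a b c : R) : 0 < a ->
  ex_series (fun n => exp (- a * INR n ^ 2 + b * INR n + c)).
Proof.
  intros Ha.
  set (K := c + (b + 1) ^ 2 / (4 * a)).
  apply (@ex_series_le R_AbsRing R_CompleteNormedModule _ (fun n => exp K * exp (-1) ^ n)).
  - intros n. change (norm ?x) with (Rabs x).
    rewrite Rabs_pos_eq by (left; apply exp_pos).
    rewrite <- exp_INR_mul, <- exp_plus.
    apply exp_le_mono.
    assert (0 <= a * (INR n - (b + 1) / (2 * a)) ^ 2)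
      by (apply Rmult_le_pos; [lra | apply pow2_ge_0]).
    replace (K + INR n * -1) with
      (- a * INR n ^ 2 + b * INR n + c + a * (INR n - (b + 1) / (2 * a)) ^ 2)
      by (unfold K; field; lra).
    lra.
  - apply (ex_series_scal_l (exp K) (fun n => exp (-1) ^ n)), ex_series_geom.
    rewrite Rabs_pos_eq by (left; apply exp_pos).
    rewrite <- exp_0; apply exp_increasing; lra.
Qed.

Definition gaussian_bounded (g : Z -> C) : Prop :=
  exists a b c, 0 < a /\ forall n, Cmod (g n) <= exp (- a * IZR n ^ 2 + b * IZR n + c).

Definition zsummable (g : Z -> C) : Prop :=
  ex_series (fun n => Re (g (Z.of_nat n))) /\ ex_series (fun n => Im (g (Z.of_nat n))) /\
  ex_series (fun n => Re (g (- Z.of_nat n - 1)%Z)) /\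
  ex_series (fun n => Im (g (- Z.of_nat n - 1)%Z)).

Lemma ex_series_Re_Im (h : nat -> C) (u : nat -> R) :
  (forall n, Cmod (h n) <= u n) -> ex_series u ->
  ex_series (fun n => Re (h n)) /\ ex_series (fun n => Im (h n)).
Proof.
  intros Hle Hu; split;
    apply (@ex_series_le R_AbsRing R_CompleteNormedModule _ u); auto;
    intros n; change (norm ?x) with (Rabs x);
    eapply Rle_trans, Hle; eapply Rle_trans, Rmax_Cmod;
    [apply Rmax_l | apply Rmax_r].
Qed.

Lemma zsummable_gaussian (g : Z -> C) : gaussian_bounded g -> zsummable g.
Proof.
  intros (a & b & c & Ha & Hg).
  assert (Hnonneg : forall n, Cmod (g (Z.of_nat n)) <= exp (- a * INR n ^ 2 + b * INR n + c))
    by (intros n; rewrite INR_IZR_INZ; apply Hg).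
  assert (Hneg : forall n, Cmod (g (- Z.of_nat n - 1)%Z) <=
                           exp (- a * INR n ^ 2 + (- 2 * a - b) * INR n + (c - a - b))).
  { intros n. eapply Rle_trans; [apply Hg | apply exp_le_mono; right].
    rewrite minus_IZR, opp_IZR, <- INR_IZR_INZ; ring. }
  destruct (ex_series_Re_Im _ _ Hnonneg (ex_series_gaussian _ _ _ Ha)) as [Hp_re Hp_im].
  destruct (ex_series_Re_Im _ _ Hneg (ex_series_gaussian _ _ _ Ha)) as [Hn_re Hn_im].
  repeat split; assumption.
Qed.

Lemma gaussian_bounded_shift (g : Z -> C) :
  gaussian_bounded g -> gaussian_bounded (fun n => g (n + 1)%Z).
Proof.
  intros (a & b & c & Ha & Hg).
  exists a, (b - 2 * a), (c - a + b); split; [exact Ha|].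
  intros n. eapply Rle_trans; [apply Hg | apply exp_le_mono; right].
  rewrite plus_IZR; ring.
Qed.

Lemma zsum_ext (f g : Z -> C) : (forall n, f n = g n) -> zsum f = zsum g.
Proof.
  intros Hfg; unfold zsum; f_equal; f_equal; apply Series_ext; intros n; rewrite Hfg; reflexivity.
Qed.

Lemma zsum_scal_l (c : C) (g : Z -> C) :
  zsummable g -> zsum (fun n => c * g n)%C = (c * zsum g)%C.
Proof.
  intros (Hp_re & Hp_im & Hn_re & Hn_im).
  assert (Hlin : forall h : nat -> C,
    ex_series (fun n => Re (h n)) -> ex_series (fun n => Im (h n)) ->
    Series (fun n => Re (c * h n)) =
      Series (fun n => Re (h n)) * Re c - Series (fun n => Im (h n)) * Im c /\
    Series (fun n => Im (c * h n)) =
      Series (fun n => Im (h n)) * Re c + Series (fun n => Re (h n)) * Im c).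
  { intros h Hre Him.
    rewrite <- !Series_scal_r, <- Series_minus, <- Series_plus
      by (apply ex_series_scal_r; assumption).
    split; apply Series_ext; intros n; [rewrite re_mult | rewrite im_mult]; ring. }
  destruct (Hlin _ Hp_re Hp_im) as [E1 E2], (Hlin _ Hn_re Hn_im) as [E3 E4].
  unfold zsum; rewrite E1, E2, E3, E4.
  apply injective_projections; unfold Re, Im; simpl; ring.
Qed.

Lemma Series_shift_nonneg (h : Z -> R) : ex_series (fun n => h (Z.of_nat n)) ->
  Series (fun n => h (Z.of_nat n + 1)%Z) = Series (fun n => h (Z.of_nat n)) - h 0%Z.
Proof.
  intros Hh. rewrite (Series_incr_1 (fun n => h (Z.of_nat n))) by exact Hh.
  rewrite (Series_ext _ (fun n => h (Z.of_nat (S n)))) by (intros n; f_equal; lia).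
  simpl; ring.
Qed.

Lemma Series_shift_neg (h : Z -> R) : ex_series (fun n => h (- Z.of_nat n - 1)%Z) ->
  Series (fun n => h (- Z.of_nat n - 1 + 1)%Z) = h 0%Z + Series (fun n => h (- Z.of_nat n - 1)%Z).
Proof.
  intros Hh.
  assert (Hsucc : forall n, h (- Z.of_nat (S n))%Z = h (- Z.of_nat n - 1)%Z)
    by (intros n; f_equal; lia).
  assert (Hex : ex_series (fun n => h (- Z.of_nat n)%Z)).
  { apply (ex_series_incr_1 (fun n => h (- Z.of_nat n)%Z)).
    eapply ex_series_ext; [intros n; symmetry; apply Hsucc | exact Hh]. }
  rewrite (Series_ext _ (fun n => h (- Z.of_nat n)%Z)) by (intros n; f_equal; lia).
  rewrite Series_incr_1 by exact Hex.
  rewrite (Series_ext _ _ Hsucc). reflexivity.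
Qed.

Lemma zsum_shift (g : Z -> C) : zsummable g -> zsum (fun n => g (n + 1)%Z) = zsum g.
Proof.
  intros (Hp_re & Hp_im & Hn_re & Hn_im). unfold zsum.
  rewrite (Series_shift_nonneg (fun n => Re (g n))), (Series_shift_nonneg (fun n => Im (g n))),
    (Series_shift_neg (fun n => Re (g n))), (Series_shift_neg (fun n => Im (g n))) by assumption.
  apply injective_projections; simpl; ring.
Qed.

(** * Quasi-periodicity of the theta functions *)

Definition theta_term (a : R) (eps : Z -> C) (v tau : C) (n : Z) : C :=
  (eps n * cexp (PI * Ci * tau * RtoC (IZR n + a) ^ 2 + 2 * PI * Ci * RtoC (IZR n + a) * v))%C.

Definition theta_char (a : R) (eps : Z -> C) (v tau : C) : C := zsum (theta_term a eps v tau).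

Lemma theta_term_add_1 (a : R) (eps : Z -> C) (v tau : C) (n : Z) :
  theta_term a eps (v + 1) tau n = (cexp (2 * PI * Ci * a) * theta_term a eps v tau n)%C.
Proof.
  unfold theta_term; rewrite RtoC_plus.
  replace (PI * Ci * tau * (IZR n + a) ^ 2 + 2 * PI * Ci * (IZR n + a) * (v + 1))%C
    with (PI * Ci * tau * (IZR n + a) ^ 2 + 2 * PI * Ci * (IZR n + a) * v
          + 2 * PI * Ci * a + 2 * PI * Ci * IZR n)%C by ring.
  rewrite !cexp_add, cexp_2PI_Ci_int; ring.
Qed.

Lemma theta_term_add_tau (a : R) (eps : Z -> C) (s v tau : C) (n : Z) :
  eps n = (s * eps (n + 1)%Z)%C ->
  theta_term a eps (v + tau) tau n =
  (s * cexp (- PI * Ci * tau - 2 * PI * Ci * v) * theta_term a eps v tau (n + 1))%C.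
Proof.
  intros Heps. unfold theta_term. rewrite Heps, plus_IZR, !RtoC_plus.
  replace (PI * Ci * tau * (IZR n + a) ^ 2 + 2 * PI * Ci * (IZR n + a) * (v + tau))%C
    with (- PI * Ci * tau - 2 * PI * Ci * v +
          (PI * Ci * tau * (IZR n + 1 + a) ^ 2 + 2 * PI * Ci * (IZR n + 1 + a) * v))%C
    by ring.
  rewrite cexp_add; ring.
Qed.

Lemma gaussian_bounded_theta_term (a : R) (eps : Z -> C) (v tau : C) : 0 < Im tau ->
  (forall n, Cmod (eps n) = 1) -> gaussian_bounded (theta_term a eps v tau).
Proof.
  intros Htau Heps.
  exists (PI * Im tau), (- 2 * PI * (a * Im tau + Im v)), (- PI * a * (a * Im tau + 2 * Im v)).
  split; [apply Rmult_lt_0_compat; [apply PI_RGT_0 | exact Htau]|].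
  intros n. unfold theta_term. rewrite Cmod_mult, Heps, Cmod_cexp, Rmult_1_l.
  right; f_equal. unfold Re, Im; simpl; ring.
Qed.

Definition theta_quasi_periodic (th : C -> C -> C) (tau : C) : Prop :=
  (forall v, Cmod (th (v + 1)%C tau) = Cmod (th v tau)) /\
  (forall v, Cmod (th (v + tau)%C tau) = exp (PI * Im tau + 2 * PI * Im v) * Cmod (th v tau)).

Lemma theta_char_quasi_periodic (a : R) (eps : Z -> C) (s tau : C) :
  0 < Im tau -> Cmod s = 1 ->
  (forall n, Cmod (eps n) = 1) -> (forall n, eps n = (s * eps (n + 1)%Z)%C) ->
  theta_quasi_periodic (theta_char a eps) tau.
Proof.
  intros Htau Hs Hmod Hsucc.
  pose proof (fun v => gaussian_bounded_theta_term a eps v tau Htau Hmod) as Hbound.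
  split; intros v; unfold theta_char.
  - rewrite (zsum_ext _ _ (theta_term_add_1 a eps v tau)), zsum_scal_l
      by (apply zsummable_gaussian, Hbound).
    rewrite Cmod_mult, Cmod_cexp.
    replace (Re _) with 0 by (unfold Re; simpl; ring).
    rewrite exp_0; ring.
  - rewrite (zsum_ext _ _ (fun n => theta_term_add_tau a eps s v tau n (Hsucc n))),
      zsum_scal_l, zsum_shift
      by (apply zsummable_gaussian; try apply gaussian_bounded_shift; apply Hbound).
    rewrite !Cmod_mult, Hs, Cmod_cexp, Rmult_1_l.
    f_equal; f_equal; unfold Re, Im; simpl; ring.
Qed.

Lemma theta_quasi_periodic_Cmod (th th' : C -> C -> C) (tau : C) :
  (forall v, Cmod (th v tau) = Cmod (th' v tau)) ->
  theta_quasi_periodic th' tau -> theta_quasi_periodic th tau.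
Proof. intros Heq [H1 Htau]; split; intros v; rewrite !Heq; auto. Qed.

Lemma q0pow_cexp (tau v : C) (x : R) :
  (q0pow tau (x ^ 2) * cexp (RtoC (2 * PI * x) * Ci * v))%C =
  cexp (PI * Ci * tau * x ^ 2 + 2 * PI * Ci * x * v).
Proof. unfold q0pow; rewrite cexp_add, RtoC_pow, !RtoC_mult; f_equal; f_equal; ring. Qed.

Lemma sgnZ_succ (n : Z) : sgnZ n = (- (1) * sgnZ (n + 1)%Z)%C.
Proof.
  unfold sgnZ. rewrite Z.add_1_r, Z.even_succ, <- Z.negb_even.
  destruct (Z.even n); simpl; ring.
Qed.

Lemma Cmod_sgnZ (n : Z) : Cmod (sgnZ n) = 1.
Proof. unfold sgnZ; destruct (Z.even n); rewrite Cmod_R; unfold Rabs; destruct Rcase_abs; lra. Qed.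

Lemma theta0_char (v tau : C) : theta0 v tau = theta_char 0 sgnZ v tau.
Proof.
  apply zsum_ext; intros n; unfold theta_term.
  rewrite Rplus_0_r, <- Cmult_assoc, q0pow_cexp; reflexivity.
Qed.

Lemma theta3_char (v tau : C) : theta3 v tau = theta_char 0 (fun _ => 1%C) v tau.
Proof.
  apply zsum_ext; intros n; unfold theta_term.
  rewrite Rplus_0_r, q0pow_cexp, Cmult_1_l; reflexivity.
Qed.

Lemma theta1_char (v tau : C) : theta1 v tau = (Ci * theta_char (- / 2) sgnZ v tau)%C.
Proof.
  unfold theta1; f_equal; apply zsum_ext; intros n; unfold theta_term, halfZ.
  replace ((2 * IZR n - 1) * PI) with (2 * PI * (IZR n - / 2)) by field.
  rewrite <- Cmult_assoc, q0pow_cexp; reflexivity.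
Qed.

Lemma theta0_quasi_periodic (tau : C) : 0 < Im tau -> theta_quasi_periodic theta0 tau.
Proof.
  intros Htau. apply (theta_quasi_periodic_Cmod _ (theta_char 0 sgnZ)).
  - intros v; rewrite theta0_char; reflexivity.
  - exact (theta_char_quasi_periodic _ _ _ _ Htau Cmod_m1 Cmod_sgnZ sgnZ_succ).
Qed.

Lemma theta1_quasi_periodic (tau : C) : 0 < Im tau -> theta_quasi_periodic theta1 tau.
Proof.
  intros Htau. apply (theta_quasi_periodic_Cmod _ (theta_char (- / 2) sgnZ)).
  - intros v; rewrite theta1_char, Cmod_mult, Cmod_Ci; ring.
  - exact (theta_char_quasi_periodic _ _ _ _ Htau Cmod_m1 Cmod_sgnZ sgnZ_succ).
Qed.

Lemma theta3_quasi_periodic (tau : C) : 0 < Im tau -> theta_quasi_periodic theta3 tau.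
Proof.
  intros Htau. apply (theta_quasi_periodic_Cmod _ (theta_char 0 (fun _ => 1%C))).
  - intros v; rewrite theta3_char; reflexivity.
  - apply (theta_char_quasi_periodic _ _ 1); auto using Cmod_1.
    intros; ring.
Qed.

Lemma theta_s_quasi_periodic (N : nat) (tau : C) : 0 < Im tau ->
  theta_quasi_periodic (theta_s N) tau.
Proof.
  intros Htau; unfold theta_s; destruct (Nat.even N).
  - exact (theta0_quasi_periodic tau Htau).
  - exact (theta3_quasi_periodic tau Htau).
Qed.

(** * Lattice periodicity *)

Definition lattice_point (tau d : C) : Prop := exists p q : Z, d = (IZR p + IZR q * tau)%C.

Definition lattice_periodic (g : C -> R) (tau : C) : Prop :=
  forall d v, lattice_point tau d -> g (v + d)%C = g v.

Lemma periodic_int_mul (g : C -> R) (d : C) : (forall v, g (v + d)%C = g v) ->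
  forall (p : Z) v, g (v + IZR p * d)%C = g v.
Proof.
  intros Hd.
  assert (Hnat : forall (k : nat) v, g (v + INR k * d)%C = g v).
  { induction k as [|k IH]; intros v.
    - f_equal; simpl; ring.
    - rewrite S_INR, RtoC_plus, <- (IH v), <- (Hd (v + INR k * d)%C). f_equal; ring. }
  intros p v. destruct (Z.le_gt_cases 0 p) as [Hp|Hp].
  - rewrite <- (Z2Nat.id p Hp), <- INR_IZR_INZ. apply Hnat.
  - replace p with (- Z.of_nat (Z.to_nat (- p)))%Z by lia.
    rewrite opp_IZR, <- INR_IZR_INZ, <- (Hnat (Z.to_nat (- p)) (v + _)%C).
    f_equal; rewrite RtoC_opp; ring.
Qed.

Lemma lattice_periodic_intro (g : C -> R) (tau : C) :
  (forall v, g (v + 1)%C = g v) -> (forall v, g (v + tau)%C = g v) -> lattice_periodic g tau.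
Proof.
  intros H1 Htau d v [p [q ->]].
  replace (v + (IZR p + IZR q * tau))%C with (v + IZR p * 1 + IZR q * tau)%C by ring.
  rewrite (periodic_int_mul g tau Htau), (periodic_int_mul g 1 H1); reflexivity.
Qed.

Lemma lattice_point_1 (tau : C) : lattice_point tau 1.
Proof. exists 1%Z, 0%Z; ring. Qed.

Lemma lattice_point_tau (tau : C) : lattice_point tau tau.
Proof. exists 0%Z, 1%Z; ring. Qed.

Lemma lattice_point_opp (tau d : C) : lattice_point tau d -> lattice_point tau (- d).
Proof. intros [p [q ->]]; exists (- p)%Z, (- q)%Z; rewrite !opp_IZR, !RtoC_opp; ring. Qed.

Lemma lattice_point_double (tau d : C) : lattice_point tau d -> lattice_point tau (2 * d).
Proof. intros [p [q ->]]; exists (2 * p)%Z, (2 * q)%Z; rewrite !mult_IZR, !RtoC_mult; ring. Qed.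

Lemma lattice_point_double_tau (tau d : C) :
  lattice_point tau d -> lattice_point (2 * tau) (2 * d).
Proof. intros [p [q ->]]; exists (2 * p)%Z, q; rewrite mult_IZR, RtoC_mult; ring. Qed.

Lemma lattice_point_half_tau (tau d : C) : lattice_point tau d -> lattice_point (tau / 2) d.
Proof.
  intros [p [q ->]]; exists p, (2 * q)%Z; rewrite mult_IZR, RtoC_mult; field.
Qed.

Definition theta_norm (th : C -> C -> C) (tau v : C) : R :=
  exp (- (2 * PI / Im tau) * Im v ^ 2) * Cmod (th v tau) ^ 2.

Lemma theta_norm_lattice_periodic (th : C -> C -> C) (tau : C) : 0 < Im tau ->
  theta_quasi_periodic th tau -> lattice_periodic (theta_norm th tau) tau.
Proof.
  intros Htau [H1 Hshift]. apply lattice_periodic_intro; intros v; unfold theta_norm.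
  - rewrite H1, im_plus, im_RtoC, Rplus_0_r; reflexivity.
  - rewrite Hshift, im_plus, Rpow_mult_distr, <- Rmult_assoc, <- exp_INR_mul, <- exp_plus.
    f_equal; f_equal; simpl; field; lra.
Qed.

Lemma lattice_periodic_scale (g : C -> R) (k tau tau' : C) :
  (forall d, lattice_point tau d -> lattice_point tau' (k * d)) ->
  lattice_periodic g tau' -> lattice_periodic (fun x => g (k * x)%C) tau.
Proof.
  intros Hk Hg d v Hd. rewrite Cmult_plus_distr_l. apply Hg, Hk, Hd.
Qed.

Lemma lattice_periodic_mult (g h : C -> R) (tau : C) :
  lattice_periodic g tau -> lattice_periodic h tau -> lattice_periodic (fun x => g x * h x) tau.
Proof. intros Hg Hh d v Hd; rewrite Hg, Hh by exact Hd; reflexivity. Qed.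

(** * Factorization of [Q] into normalized theta functions *)

Fixpoint prodR (n : nat) (f : nat -> R) : R :=
  match n with O => 1 | S k => prodR k f * f k end.

Lemma prodR_ext (n : nat) (f g : nat -> R) : (forall k, f k = g k) -> prodR n f = prodR n g.
Proof. intros Hfg; induction n as [|n IH]; simpl; [reflexivity | rewrite IH, Hfg; reflexivity]. Qed.

Lemma sumR_ext (n : nat) (f g : nat -> R) : (forall k, f k = g k) -> sumR n f = sumR n g.
Proof. intros Hfg; induction n as [|n IH]; simpl; [reflexivity | rewrite IH, Hfg; reflexivity]. Qed.

Lemma sumR_scal_l (n : nat) (c : R) (f : nat -> R) :
  sumR n (fun k => c * f k) = c * sumR n f.
Proof. induction n as [|n IH]; simpl; [ring | rewrite IH; ring]. Qed.

Lemma sumR_sq_sub (n : nat) (a : R) (y : nat -> R) :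
  sumR n (fun j => (a - y j) ^ 2) =
  INR n * a ^ 2 - 2 * a * sumR n y + sumR n (fun j => y j ^ 2).
Proof. induction n as [|n IH]; cbn [sumR]; [simpl; ring | rewrite IH, S_INR; ring]. Qed.

Lemma sumR_sq_sub_add_sq_add (n : nat) (a : R) (y : nat -> R) :
  sumR n (fun j => (a - y j) ^ 2 + (a + y j) ^ 2) =
  2 * INR n * a ^ 2 + 2 * sumR n (fun j => y j ^ 2).
Proof. induction n as [|n IH]; cbn [sumR]; [simpl; ring | rewrite IH, S_INR; ring]. Qed.

Lemma sq_sumR_add_sumR_sq_sub (N : nat) (y : nat -> R) :
  sumR N y ^ 2 + sumR N (fun k => sumR k (fun j => (y k - y j) ^ 2)) =
  INR N * sumR N (fun j => y j ^ 2).
Proof.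
  induction N as [|N IH]; cbn [sumR]; [simpl; ring|].
  rewrite sumR_sq_sub, S_INR. nra.
Qed.

Lemma sumR_pairs_sq_sub_add_sq_add (N : nat) (y : nat -> R) :
  sumR N (fun k => sumR k (fun j => (y k - y j) ^ 2 + (y k + y j) ^ 2)) =
  2 * (INR N - 1) * sumR N (fun j => y j ^ 2).
Proof.
  induction N as [|N IH]; cbn [sumR]; [simpl; ring|].
  rewrite IH, sumR_sq_sub_add_sq_add, S_INR; ring.
Qed.

Lemma prodR_exp_Cmod (n : nat) (c : R) (w : nat -> R) (f : nat -> C) :
  prodR n (fun k => exp (c * w k) * Cmod (f k) ^ 2) = exp (c * sumR n w) * Cmod (prodC n f) ^ 2.
Proof.
  induction n as [|n IH]; cbn [prodR prodC sumR].
  - rewrite Rmult_0_r, exp_0, Cmod_1; ring.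
  - rewrite IH, Cmod_mult, Rmult_plus_distr_l, exp_plus; ring.
Qed.

Lemma Im_Cminus (x y : C) : Im (x - y) = Im x - Im y.
Proof. unfold Im; simpl; ring. Qed.

Lemma Im_sumC (n : nat) (f : nat -> C) : Im (sumC n f) = sumR n (fun k => Im (f k)).
Proof.
  induction n as [|n IH]; cbn [sumC sumR]; [apply im_RtoC | rewrite im_plus, IH; reflexivity].
Qed.

Definition single_factor (Rs : RootSys) (tau x : C) : R :=
  match Rs with
  | TB => theta_norm theta1 tau x
  | TBv => theta_norm theta1 (2 * tau) (2 * x)
  | TC => theta_norm theta1 tau (2 * x)
  | TCv => theta_norm theta1 (tau / 2) x
  | TBC => theta_norm theta1 tau x * theta_norm theta0 (2 * tau) (2 * x)
  | TA | TD => 1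
  end.

Definition pair_factor (tau x y : C) : R :=
  theta_norm theta1 tau (x - y) * theta_norm theta1 tau (x + y).

Definition Qtheta (Rs : RootSys) (N : nat) (tau : C) (xi : nat -> C) : R :=
  match Rs with
  | TA => theta_norm (theta_s N) tau (sumC N xi) *
          prodR N (fun k => prodR k (fun j => theta_norm theta1 tau (xi k - xi j)))
  | _ => prodR N (fun l => single_factor Rs tau (xi l)) *
         prodR N (fun k => prodR k (fun j => pair_factor tau (xi k) (xi j)))
  end.

Lemma exp_split_mult (K a b c X Y : R) : a + b = c ->
  exp (K * a) * X * (exp (K * b) * Y) = exp (K * c) * X * Y.
Proof. intros <-; rewrite Rmult_plus_distr_l, exp_plus; ring. Qed.

Lemma prodR_gauss_Cmod (h : C -> R) (s : C -> C) (c : R) (N : nat) (tau : C) (xi : nat -> C) :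
  (forall x, h x = exp (- (2 * PI / Im tau) * (c * Im x ^ 2)) * Cmod (s x) ^ 2) ->
  prodR N (fun l => h (xi l)) =
  exp (- (2 * PI / Im tau) * (c * sumR N (fun j => Im (xi j) ^ 2))) *
  Cmod (prodC N (fun l => s (xi l))) ^ 2.
Proof.
  intros Hh. rewrite (prodR_ext _ _ _ (fun l => Hh (xi l))), prodR_exp_Cmod, sumR_scal_l.
  reflexivity.
Qed.

Lemma prodR_theta_norm_diff (N : nat) (tau : C) (xi : nat -> C) :
  prodR N (fun k => prodR k (fun j => theta_norm theta1 tau (xi k - xi j))) =
  exp (- (2 * PI / Im tau) *
       sumR N (fun k => sumR k (fun j => (Im (xi k) - Im (xi j)) ^ 2))) *
  Cmod (prodC N (fun k => prodC k (fun j => theta1 (xi k - xi j) tau))) ^ 2.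
Proof.
  rewrite <- prodR_exp_Cmod. apply prodR_ext; intros k.
  rewrite <- prodR_exp_Cmod. apply prodR_ext; intros j.
  unfold theta_norm; rewrite Im_Cminus; reflexivity.
Qed.

Lemma prodR_pair_factor (N : nat) (tau : C) (xi : nat -> C) :
  prodR N (fun k => prodR k (fun j => pair_factor tau (xi k) (xi j))) =
  exp (- (2 * PI / Im tau) * (2 * (INR N - 1) * sumR N (fun j => Im (xi j) ^ 2))) *
  Cmod (Pfac N xi tau) ^ 2.
Proof.
  unfold Pfac; rewrite <- sumR_pairs_sq_sub_add_sq_add, <- prodR_exp_Cmod.
  apply prodR_ext; intros k.
  rewrite <- prodR_exp_Cmod. apply prodR_ext; intros j.
  unfold pair_factor, theta_norm.
  rewrite Im_Cminus, im_plus, Cmod_mult, Rpow_mult_distr, Rmult_plus_distr_l, exp_plus; ring.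
Qed.

Lemma prodR_pair_factor_split (N : nat) (tau : C) (xi : nat -> C) (c e single : R) (X : C) :
  single = exp (- (2 * PI / Im tau) * (c * sumR N (fun j => Im (xi j) ^ 2))) * Cmod X ^ 2 ->
  e = c + 2 * (INR N - 1) ->
  single * prodR N (fun k => prodR k (fun j => pair_factor tau (xi k) (xi j))) =
  exp (- (2 * PI / Im tau) * (e * sumR N (fun j => Im (xi j) ^ 2))) * 1 *
  Cmod (X * Pfac N xi tau) ^ 2.
Proof.
  intros -> ->.
  rewrite prodR_pair_factor, Cmod_mult, Rmult_plus_distr_r, Rmult_plus_distr_l, exp_plus.
  ring.
Qed.

Lemma prodC_const_1 (n : nat) : prodC n (fun _ => 1%C) = 1%C.
Proof. induction n as [|n IH]; simpl; [reflexivity | rewrite IH; apply Cmult_1_l]. Qed.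

Lemma Qtheta_gauss (Rs : RootSys) (N : nat) (tau : C) (xi : nat -> C) :
  Im tau <> 0 -> (0 < N)%nat ->
  Qtheta Rs N tau xi =
  exp (- (2 * PI / Im tau) * (INR (calN Rs N) * sumR N (fun j => Im (xi j) ^ 2))) *
  (match Rs with TA => Cmod (theta_s N (sumC N xi) tau) ^ 2 | _ => 1 end) *
  Cmod (Wden Rs N xi tau) ^ 2.
Proof.
  intros Htau HN.
  assert (Him2 : forall x, Im (2 * x) = 2 * Im x) by (intros x; unfold Im; simpl; ring).
  assert (Him_half : Im (tau / 2) = Im tau / 2) by (unfold Im; simpl; field).
  destruct Rs; unfold Qtheta, Wden.
  - rewrite prodR_theta_norm_diff; unfold theta_norm; rewrite Im_sumC.
    rewrite exp_split_mult with (c := INR N * sumR N (fun j => Im (xi j) ^ 2))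
      by apply sq_sumR_add_sumR_sq_sub.
    unfold calN; ring.
  - apply prodR_pair_factor_split with (c := 1).
    + apply (prodR_gauss_Cmod _ (fun x => theta1 x tau)); intros x.
      unfold single_factor, theta_norm; rewrite Rmult_1_l; reflexivity.
    + unfold calN; rewrite minus_INR, mult_INR by lia; simpl; ring.
  - apply prodR_pair_factor_split with (c := 2).
    + apply (prodR_gauss_Cmod _ (fun x => theta1 (2 * x) (2 * tau))); intros x.
      unfold single_factor, theta_norm; rewrite !Him2; f_equal; f_equal; field; exact Htau.
    + unfold calN; rewrite mult_INR; simpl; ring.
  - apply prodR_pair_factor_split with (c := 4).
    + apply (prodR_gauss_Cmod _ (fun x => theta1 (2 * x) tau)); intros x.
      unfold single_factor, theta_norm; rewrite Him2; f_equal; f_equal; field; exact Htau.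
    + unfold calN; rewrite mult_INR, plus_INR; simpl; ring.
  - apply prodR_pair_factor_split with (c := 2).
    + apply (prodR_gauss_Cmod _ (fun x => theta1 x (tau / 2))); intros x.
      unfold single_factor, theta_norm; rewrite Him_half; f_equal; f_equal; field; exact Htau.
    + unfold calN; rewrite mult_INR; simpl; ring.
  - apply prodR_pair_factor_split with (c := 3).
    + apply (prodR_gauss_Cmod _ (fun x => theta1 x tau * theta0 (2 * x) (2 * tau))%C); intros x.
      unfold single_factor, theta_norm; rewrite !Him2, Cmod_mult.
      replace (- (2 * PI / Im tau) * (3 * Im x ^ 2)) with
        (- (2 * PI / Im tau) * Im x ^ 2 + - (2 * PI / (2 * Im tau)) * (2 * Im x) ^ 2)
        by (field; exact Htau).
      rewrite exp_plus; ring.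
    + unfold calN; rewrite plus_INR, mult_INR; simpl; ring.
  - rewrite <- (Cmult_1_l (Pfac N xi tau)).
    apply prodR_pair_factor_split with (c := 0).
    + rewrite <- (prodC_const_1 N).
      apply (prodR_gauss_Cmod _ (fun _ => 1%C)); intros x.
      unfold single_factor; rewrite Cmod_1, Rmult_0_l, Rmult_0_r, exp_0; ring.
    + unfold calN; rewrite mult_INR, minus_INR by lia; simpl; ring.
Qed.

(** * Invariance under lattice shifts of one coordinate *)

Lemma single_factor_lattice_periodic (Rs : RootSys) (tau : C) : 0 < Im tau ->
  lattice_periodic (single_factor Rs tau) tau.
Proof.
  intros Htau.
  assert (Htau2 : 0 < Im (2 * tau)) by (unfold Im in *; simpl; lra).
  assert (Htau_half : 0 < Im (tau / 2)).
  { replace (Im (tau / 2)) with (Im tau / 2) by (unfold Im; simpl; field). lra. }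
  pose proof (theta_norm_lattice_periodic _ _ Htau (theta1_quasi_periodic _ Htau)) as H1.
  pose proof (theta_norm_lattice_periodic _ _ Htau2 (theta1_quasi_periodic _ Htau2)) as H1_double.
  pose proof (theta_norm_lattice_periodic _ _ Htau2 (theta0_quasi_periodic _ Htau2)) as H0_double.
  pose proof (theta_norm_lattice_periodic _ _ Htau_half (theta1_quasi_periodic _ Htau_half))
    as H1_half.
  destruct Rs; simpl.
  - intros d v _; reflexivity.
  - exact H1.
  - exact (lattice_periodic_scale _ 2 _ _ (lattice_point_double_tau tau) H1_double).
  - exact (lattice_periodic_scale _ 2 _ _ (lattice_point_double tau) H1).
  - intros d v Hd; exact (H1_half d v (lattice_point_half_tau tau d Hd)).
  - apply lattice_periodic_mult; [exact H1 |].
    exact (lattice_periodic_scale _ 2 _ _ (lattice_point_double_tau tau) H0_double).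
  - intros d v _; reflexivity.
Qed.

Lemma sigma_m_invariant (h : C -> R) (m : nat) (d : C) (xi : nat -> C) (l : nat) :
  (forall x, h (x + d)%C = h x) -> h (sigma_m m d xi l) = h (xi l).
Proof. intros Hh; unfold sigma_m; destruct (l =? m); [apply Hh | reflexivity]. Qed.

Lemma sumC_sigma_m (N m : nat) (d : C) (xi : nat -> C) : (m < N)%nat ->
  sumC N (sigma_m m d xi) = (sumC N xi + d)%C.
Proof.
  induction N as [|N IH]; intros Hm; [lia|]. simpl. unfold sigma_m at 2.
  destruct (Nat.eqb_spec N m) as [-> | Hne].
  - assert (Hbelow : forall k, (k <= m)%nat -> sumC k (sigma_m m d xi) = sumC k xi).
    { induction k as [|k IHk]; intros Hk; simpl; [reflexivity|].
      rewrite IHk by lia. unfold sigma_m.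
      destruct (Nat.eqb_spec k m); [lia | reflexivity]. }
    rewrite Hbelow by lia; ring.
  - rewrite IH by lia; ring.
Qed.

Lemma prodR_sigma_m (h : C -> R) (N m : nat) (d : C) (xi : nat -> C) :
  (forall x, h (x + d)%C = h x) ->
  prodR N (fun l => h (sigma_m m d xi l)) = prodR N (fun l => h (xi l)).
Proof. intros Hh; apply prodR_ext; intros l; apply sigma_m_invariant, Hh. Qed.

Lemma prodR_pairs_sigma_m (F : C -> C -> R) (N m : nat) (d : C) (xi : nat -> C) :
  (forall x y, F (x + d)%C y = F x y) -> (forall x y, F x (y + d)%C = F x y) ->
  prodR N (fun k => prodR k (fun j => F (sigma_m m d xi k) (sigma_m m d xi j))) =
  prodR N (fun k => prodR k (fun j => F (xi k) (xi j))).
Proof.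
  intros Hl Hr; apply prodR_ext; intros k; apply prodR_ext; intros j.
  rewrite (sigma_m_invariant (fun x => F x _)), (sigma_m_invariant (F (xi k))); auto.
Qed.

Lemma Qtheta_sigma_m (Rs : RootSys) (N m : nat) (tau d : C) (xi : nat -> C) :
  0 < Im tau -> (m < N)%nat -> lattice_point tau d ->
  Qtheta Rs N tau (sigma_m m d xi) = Qtheta Rs N tau xi.
Proof.
  intros Htau Hm Hd.
  assert (H1 : forall u w e, lattice_point tau e -> u = (w + e)%C ->
                 theta_norm theta1 tau u = theta_norm theta1 tau w).
  { intros u w e He ->.
    exact (theta_norm_lattice_periodic _ _ Htau (theta1_quasi_periodic tau Htau) e w He). }
  pose proof (lattice_point_opp tau d Hd) as Hd_opp.
  destruct Rs; unfold Qtheta.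
  - rewrite (sumC_sigma_m N m d xi Hm), (prodR_pairs_sigma_m (fun x y => _ (x - y)%C)).
    + f_equal.
      exact (theta_norm_lattice_periodic _ _ Htau (theta_s_quasi_periodic N tau Htau) d _ Hd).
    + intros x y; apply (H1 _ _ d Hd); ring.
    + intros x y; apply (H1 _ _ (- d)%C Hd_opp); ring.
  all: rewrite prodR_sigma_m, prodR_pairs_sigma_m; [reflexivity | ..].
  all: try (intros x; apply (single_factor_lattice_periodic _ _ Htau), Hd).
  all: intros x y; unfold pair_factor; f_equal.
  all: first [apply (H1 _ _ d Hd); ring | apply (H1 _ _ (- d)%C Hd_opp); ring].
Qed.

Lemma sigma_m_div (m : nat) (w c : C) (z : nat -> C) :
  (fun j => sigma_m m w z j / c)%C = sigma_m m (w / c) (fun j => z j / c)%C.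
Proof.
  apply functional_extensionality; intros j; unfold sigma_m.
  destruct (j =? m); [unfold Cdiv; ring | reflexivity].
Qed.

Lemma Qfun_Qtheta (Rs : RootSys) (N : nat) (L W : R) (z : nat -> C) :
  0 < L -> 0 < W -> (0 < N)%nat ->
  Qfun Rs N L W z = Qtheta Rs N (tauLW L W) (fun j => z j / L)%C.
Proof.
  intros HL HW HN.
  assert (Htau : Im (tauLW L W) = W / L) by reflexivity.
  assert (Htau_pos : 0 < W / L) by (apply Rdiv_lt_0_compat; assumption).
  rewrite Qtheta_gauss by (rewrite ?Htau; lra || lia).
  assert (Hscale : sumR N (fun j => Im (z j / L)%C ^ 2) = / L ^ 2 * sumR N (fun j => Im (z j) ^ 2)).
  { rewrite <- sumR_scal_l. apply sumR_ext; intros j. unfold Im; simpl; field; lra. }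
  unfold Qfun; cbv zeta. rewrite Hscale, Htau.
  f_equal; f_equal; f_equal. field; lra.
Qed.

Theorem proposition2p2 :
  forall (L W : R), 0 < L -> 0 < W ->
  forall (Rs : RootSys) (N : nat) (z : nat -> C) (m : nat), (m < N)%nat ->
    Qfun Rs N L W (sigma_m m (RtoC L) z) = Qfun Rs N L W z /\
    Qfun Rs N L W (sigma_m m ((0, W) : C) z) = Qfun Rs N L W z.
Proof.
  intros L W HL HW Rs N z m Hm.
  assert (Htau : 0 < Im (tauLW L W)) by (apply Rdiv_lt_0_compat; assumption).
  assert (Hshift : forall w, lattice_point (tauLW L W) (w / L)%C ->
    Qfun Rs N L W (sigma_m m w z) = Qfun Rs N L W z).
  { intros w Hw. rewrite !Qfun_Qtheta, sigma_m_div by (assumption || lia).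
    apply Qtheta_sigma_m; assumption. }
  split; apply Hshift.
  - replace (RtoC L / RtoC L)%C with (RtoC 1) by (field; intros H; injection H; lra).
    apply lattice_point_1.
  - replace (((0, W) : C) / L)%C with (tauLW L W)
      by (apply injective_projections; unfold tauLW; simpl; field; lra).
    apply lattice_point_tau.
Qed.
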